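(* Let $a_0,\ldots,a_4$ be elements of an algebraically closed field of characteristic $0$ with $a_0a_1a_2a_3a_4\neq 0$. Then the singular points of $S^{(a_0,\ldots,a_4)}$ are exactly the points of the form $$\Big(\tfrac{1}{\sqrt{a_0}} : (-1)^{i_1}\tfrac{1}{\sqrt{a_1}} : (-1)^{i_2}\tfrac{1}{\sqrt{a_2}} : (-1)^{i_3}\tfrac{1}{\sqrt{a_3}} : (-1)^{i_4}\tfrac{1}{\sqrt{a_4}}\Big),\qquad i_1,\ldots,i_4\in\{0,1\},$$ (for fixed choices of the square roots) which lie on the hyperplane $X_0+X_1+X_2+X_3+X_4=0$.
   Context: For coefficients $a_0,\ldots,a_4$ (not all zero), $S^{(a_0,\ldots,a_4)}$ denotes the cubic surface in $\mathbf{P}^4$ (with coordinates $X_0,\ldots,X_4$) defined by the system $a_0X_0^3+a_1X_1^3+a_2X_2^3+a_3X_3^3+a_4X_4^3=0$, $X_0+X_1+X_2+X_3+X_4=0$. *)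

From HB Require Import structures.
From mathcomp Require Import all_boot all_order all_algebra all_field.
Set Implicit Arguments. Unset Strict Implicit. Unset Printing Implicit Defensive.
Import Order.TTheory GRing.Theory Num.Theory.
Local Open Scope ring_scope.

(* Points of P^4 over K are represented by nonzero coordinate vectors
   x : 'I_5 -> K (homogeneous coordinates X_0..X_4), up to nonzero scaling. *)
Definition nonzero_vec (K : fieldType) (x : 'I_5 -> K) : Prop :=
  exists i, x i != 0.

Definition cubicF (K : fieldType) (a x : 'I_5 -> K) : K :=
  \sum_(i < 5) a i * x i ^+ 3.

Definition linG (K : fieldType) (x : 'I_5 -> K) : K := \sum_(i < 5) x i.

Definition on_surface (K : fieldType) (a x : 'I_5 -> K) : Prop :=
  cubicF a x = 0 /\ linG x = 0.

Definition jacobian (K : fieldType) (a x : 'I_5 -> K) : 'M[K]_(2, 5) :=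
  \matrix_(i < 2, j < 5) (if i == 0 then 3%:R * a j * x j ^+ 2 else 1).

(* Singular point of the complete intersection S^(a) (Jacobian criterion):
   a point of S where the Jacobian has rank < 2 (= codimension). *)
Definition singular_point (K : fieldType) (a x : 'I_5 -> K) : Prop :=
  on_surface a x /\ (\rank (jacobian a x) < 2)%N.

(* The candidate point ( 1/s_0 : (-1)^{e_1}/s_1 : ... : (-1)^{e_4}/s_4 ),
   where s_j is a chosen square root of a_j. *)
Definition cand_pt (K : fieldType) (s : 'I_5 -> K) (e : 'I_5 -> bool) : 'I_5 -> K :=
  fun j => (-1) ^+ e j * (s j)^-1.

From HB Require Import structures.
From mathcomp Require Import all_boot all_order all_algebra all_field.
From mathcomp Require Import ring.
Set Implicit Arguments. Unset Strict Implicit. Unset Printing Implicit Defensive.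
Import Order.TTheory GRing.Theory Num.Theory.
Local Open Scope ring_scope.

(* Since the second row of the Jacobian is (1,...,1), the rank drops exactly
   when the gradient of F is proportional to it, i.e. when all a_j x_j^2 are
   equal to one value mu.  On such points F = mu * G, so the point lies on S as
   soon as it lies on the hyperplane.  Writing c = x_0 s_0, the equalities
   (x_j s_j)^2 = mu = c^2 give x_j s_j = +-c, which is the candidate point
   scaled by c; and the hyperplane condition is invariant under this scaling. *)

Lemma rank_col_mx_lt2 (K : fieldType) (n : nat) (u w : 'rV[K]_n) :
  w != 0 -> (\rank (col_mx u w) < 2)%N = (u <= w)%MS.
Proof.
move=> w0; have rkw : \rank w = 1%N by rewrite rank_rV w0.
have sw : (w <= col_mx u w)%MS by rewrite -addsmxE addsmxSr.
apply/idP/idP => [rk_lt2 | suw].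
- have : (\rank (col_mx u w) <= \rank w)%N by rewrite rkw -ltnS.
  by rewrite (geq_leqif (mxrank_leqif_sup sw)) col_mx_sub => /andP[].
- have /mxrankS : (col_mx u w <= w)%MS by rewrite col_mx_sub suw submx_refl.
  by rewrite rkw.
Qed.

Lemma sub_const1_rV (K : fieldType) (n : nat) (u : 'rV[K]_n) :
  (u <= (const_mx 1 : 'rV[K]_n))%MS <-> exists c, u = const_mx c.
Proof.
split=> [/submxP[D ->] | [c ->]].
  by exists (D 0 0); apply/rowP=> j; rewrite !mxE big_ord1 !mxE mulr1.
apply/submxP; exists c%:M; apply/rowP=> j.
by rewrite !mxE big_ord1 !mxE mulr1.
Qed.

Lemma jacobianE (K : fieldType) (a x : 'I_5 -> K) :
  jacobian a x = col_mx (\row_j (3%:R * a j * x j ^+ 2)) (const_mx 1).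
Proof.
apply/matrixP=> i j; rewrite !mxE.
by case: splitP => k; rewrite ord1 !mxE => hi; rewrite -(inj_eq val_inj) /= hi.
Qed.

Lemma rank_jacobian_lt2 (K : fieldType) (a x : 'I_5 -> K) :
  (3%:R : K) != 0 ->
  (\rank (jacobian a x) < 2)%N <-> exists mu, forall j, a j * x j ^+ 2 = mu.
Proof.
move=> h3; have one0 : const_mx 1 != 0 :> 'rV[K]_5.
  by apply/eqP=> /rowP/(_ ord0); rewrite !mxE; apply/eqP/oner_neq0.
rewrite jacobianE rank_col_mx_lt2 // sub_const1_rV.
split=> [[c /rowP hc] | [mu hmu]].
  by exists (c / 3%:R) => j; move: (hc j); rewrite !mxE => <-; field.
by exists (3%:R * mu); apply/rowP=> j; rewrite !mxE -mulrA hmu.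
Qed.

Lemma cubicF_const_weights (K : fieldType) (a x : 'I_5 -> K) (mu : K) :
  (forall j, a j * x j ^+ 2 = mu) -> cubicF a x = mu * linG x.
Proof.
move=> hmu; rewrite /cubicF /linG mulr_sumr.
by apply: eq_bigr => j _; rewrite exprSr mulrA hmu.
Qed.

Lemma singular_pointE (K : fieldType) (a x : 'I_5 -> K) :
  (3%:R : K) != 0 ->
  singular_point a x <-> linG x = 0 /\ exists mu, forall j, a j * x j ^+ 2 = mu.
Proof.
move=> h3; rewrite /singular_point /on_surface.
split=> [[[_ hG] /(rank_jacobian_lt2 _ _ h3)] // | [hG [mu hmu]]].
split; last by apply/(rank_jacobian_lt2 _ _ h3); exists mu.
by rewrite (cubicF_const_weights hmu) hG mulr0.
Qed.

Lemma linG_scaled (K : fieldType) (c : K) (x y : 'I_5 -> K) :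
  (forall j, x j = c * y j) -> linG x = c * linG y.
Proof. by move=> hxy; rewrite /linG mulr_sumr; apply: eq_bigr => j _; apply: hxy. Qed.

Lemma sqr_eq_sign (K : idomainType) (y c : K) :
  y ^+ 2 = c ^+ 2 -> y = (-1) ^+ (y != c) * c.
Proof.
move/eqP; rewrite -subr_eq0 subr_sqr mulf_eq0 subr_eq0 addr_eq0.
by case: eqVneq => [-> | _] /= => [_ | /eqP ->]; rewrite ?mul1r ?mulN1r.
Qed.

Section CandidatePoints.

Variables (K : fieldType) (a s : 'I_5 -> K).
Hypotheses (ha : forall i, a i != 0) (hs : forall i, s i ^+ 2 = a i).

Let s_neq0 i : s i != 0.
Proof. by apply: contraNneq (ha i) => s0; rewrite -hs s0 expr0n. Qed.

Lemma eq_scaled_cand_pt (x : 'I_5 -> K) (c : K) (e : 'I_5 -> bool) j :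
  (x j = c * cand_pt s e j) <-> (x j * s j = (-1) ^+ e j * c).
Proof.
rewrite /cand_pt; split=> [-> | hx]; first by field; apply: s_neq0.
by apply: (mulIf (s_neq0 j)); rewrite hx; field; apply: s_neq0.
Qed.

Lemma weights_constP (x : 'I_5 -> K) : nonzero_vec x ->
  (exists mu, forall j, a j * x j ^+ 2 = mu) <->
  exists e : 'I_5 -> bool, e ord0 = false /\
    exists c : K, c != 0 /\ forall j, x j = c * cand_pt s e j.
Proof.
move=> [i xi0]; split=> [[mu hmu] | [e [_ [c [c0 hxc]]]]].
- set c := x ord0 * s ord0.
  have hc2 j : (x j * s j) ^+ 2 = c ^+ 2 by rewrite !exprMn !hs ![_ * a _]mulrC !hmu.
  exists (fun j => x j * s j != c); split; first by rewrite eqxx.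
  exists c; split=> [|j]; last exact/eq_scaled_cand_pt/sqr_eq_sign/hc2.
  apply: contraNneq xi0 => c0; move: (hc2 i).
  by rewrite c0 expr0n /= => /eqP; rewrite sqrf_eq0 mulf_eq0 (negPf (s_neq0 i)) orbF.
- exists (c ^+ 2) => j; move/eq_scaled_cand_pt: (hxc j) => /(congr1 (fun y => y ^+ 2)).
  by rewrite !exprMn hs sqrr_sign mul1r mulrC.
Qed.

End CandidatePoints.

Theorem mainTheorem2 (K : closedFieldType) (hchar : [pchar K] =i pred0)
  (a : 'I_5 -> K) (ha : forall i, a i != 0)
  (s : 'I_5 -> K) (hs : forall i, s i ^+ 2 = a i)
  (x : 'I_5 -> K) (hx : nonzero_vec x) :
  singular_point a x <->
  exists e : 'I_5 -> bool,
    [/\ e ord0 = false,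
        linG (cand_pt s e) = 0 &
        exists c : K, c != 0 /\ forall j, x j = c * cand_pt s e j].
Proof.
have h3 : (3%:R : K) != 0 by rewrite ((pcharf0P _).1 hchar 3).
rewrite singular_pointE // (weights_constP ha hs hx).
split=> [[hG [e [e0 [c [c0 hxc]]]]] | [e [e0 hl [c [c0 hxc]]]]].
- exists e; split=> //; last by exists c.
  by apply: (mulfI c0); rewrite mulr0 -hG (linG_scaled hxc).
- split; last by exists e; split=> //; exists c.
  by rewrite (linG_scaled hxc) hl mulr0.
Qed.
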